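(* Every subquotient (in the category of $\mathcal{D}_{\mathbb{A}^n_{\mathbb{C}}}$-modules) of a linear module on $\mathbb{A}^n_{\mathbb{C}}$ is a linear module.
   Context: All $\mathcal{D}$-modules are algebraic. For a finite-dimensional $\mathbb{C}$-vector space $E$ and a linear form $\varphi:E\to\mathbb{C}$, let $\mathcal{E}^{\varphi}$ denote the $\mathcal{D}_E$-module $(\mathcal{O}_E, d+d\varphi)$. A \emph{linear module on $E$} is a $\mathcal{D}_E$-module isomorphic to a finite direct sum of modules of the form $\mathcal{E}^{\varphi}$ with $\varphi$ linear forms on $E$. *)

From HB Require Import structures.
From mathcomp Require Import all_boot all_algebra.
From mathcomp Require Import complex.
From mathcomp Require Import Rstruct.
From mathcomp Require Import mpoly.

Set Implicit Arguments.
Unset Strict Implicit.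
Unset Printing Implicit Defensive.

Import GRing.Theory.
Local Open Scope ring_scope.

Definition CC : numClosedFieldType := (Rdefinitions.R)[i].

Definition lin (U V : lmodType CC) (f : U -> V) : Prop :=
  forall (a : CC) (u v : U), f (a *: u + v) = a *: f u + f v.

(* A D-module on A^n_C: a C-vector space M with linear operators X_i
   (multiplication by the coordinate x_i) and D_i (action of d/dx_i)
   satisfying the Weyl algebra relations. *)
Definition is_Dmodule (n : nat) (M : lmodType CC)
    (X D : 'I_n -> M -> M) : Prop :=
  [/\ forall i, lin (X i),
      forall i, lin (D i),
      forall i j m, X i (X j m) = X j (X i m),
      forall i j m, D i (D j m) = D j (D i m) &
      forall i j m, D i (X j m) - X j (D i m) = (i == j)%:R *: m].

Definition is_Dhom (n : nat) (M : lmodType CC) (XM DM : 'I_n -> M -> M)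
    (N : lmodType CC) (XN DN : 'I_n -> N -> N) (f : M -> N) : Prop :=
  [/\ lin f,
      forall i m, f (XM i m) = XN i (f m) &
      forall i m, f (DM i m) = DN i (f m)].

(* The module  E^{phi_1} (+) ... (+) E^{phi_k}  where phi_j are linear forms
   (homogeneous polynomials of degree 1) : the underlying space is O^k with
   O = C[x_1..x_n]; x_i acts by multiplication and d_i acts on the j-th
   component as  d/dx_i + d(phi_j)/dx_i  (i.e. the connection d + d phi_j). *)
Definition LinSum (n k : nat) := {ffun 'I_k -> {mpoly CC[n]}}.

Definition LinX (n k : nat) (i : 'I_n) (p : LinSum n k) : LinSum n k :=
  [ffun j => 'X_i * p j].

Definition LinD (n k : nat) (phi : 'I_k -> {mpoly CC[n]}) (i : 'I_n)
    (p : LinSum n k) : LinSum n k :=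
  [ffun j => mderiv i (p j) + mderiv i (phi j) * p j].

Definition is_linear_module (n : nat) (M : lmodType CC)
    (X D : 'I_n -> M -> M) : Prop :=
  exists (k : nat) (phi : 'I_k -> {mpoly CC[n]}) (f : LinSum n k -> M),
    [/\ forall j, phi j \is 1.-homog,
        is_Dhom (@LinX n k) (LinD phi) X D f &
        bijective f].

(* M is a subquotient of the D-module L: there are D-submodules N' <= N of L
   with M isomorphic to N/N'.  Equivalently (and this is how we phrase it),
   there is a D-submodule N of L and a surjective D-module morphism N ->> M
   (its kernel being N'). *)
Definition is_Dsubmodule (n : nat) (L : lmodType CC) (X D : 'I_n -> L -> L)
    (N : {pred L}) : Prop :=
  [/\ 0 \in N,
      forall a u v, u \in N -> v \in N -> a *: u + v \in N,
      forall i u, u \in N -> X i u \in N &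
      forall i u, u \in N -> D i u \in N].

Definition is_subquotient (n : nat) (L : lmodType CC) (XL DL : 'I_n -> L -> L)
    (M : lmodType CC) (XM DM : 'I_n -> M -> M) : Prop :=
  exists (N : {pred L}) (f : L -> M),
    [/\ is_Dsubmodule XL DL N,
        forall a u v, u \in N -> v \in N -> f (a *: u + v) = a *: f u + f v,
        forall i u, u \in N -> f (XL i u) = XM i (f u),
        forall i u, u \in N -> f (DL i u) = DM i (f u) &
        forall m, exists2 u, u \in N & f u = m].

(* In L = E^{phi_1} (+) ... (+) E^{phi_k}, d_i acts on the j-th component as
   d/dx_i + c_{j,i}, where c_j is the gradient of phi_j; group the components
   into classes of equal gradient.  The key fact is that a D-submodule N of L
   contains, with every u, the constant vector of the coefficients of x^b in
   the components of u of any one class.  By induction on the degree: the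
   operators d_i - c_{j,i}, for j outside the class, lower the degree of the
   components of class j while rescaling the top coefficients of the chosen
   class by a nonzero factor, and d_i - c_i then differentiates the chosen class
   itself.  So N is generated over C[x] by class-homogeneous constant vectors.
   For a quotient N/K, a maximal family of such vectors that is free modulo K
   has at most k elements, and the sum of the corresponding E^{phi_j}, mapped
   to N/K, is an isomorphism of D-modules. *)

From HB Require Import structures.
From mathcomp Require Import all_boot all_algebra.
From mathcomp Require Import complex Rstruct mpoly.
From Stdlib Require Import Classical.

Set Implicit Arguments.
Unset Strict Implicit.
Unset Printing Implicit Defensive.
Import GRing.Theory Num.Theory.
Local Open Scope ring_scope.

Section MpolySize.
Variables (R : nzRingType) (n : nat).
Implicit Types (p : {mpoly R[n]}) (m b : 'X_{1..n}).

Lemma leq_msizeP p d :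
  reflect (forall m, (d <= mdeg m)%N -> p@_m = 0) (msize p <= d)%N.
Proof.
apply: (iffP idP) => [le_pd m le_dm | p_small].
  by apply: memN_msupp_eq0; apply: msize_mdeg_ge; apply: leq_trans le_dm.
rewrite msizeE big_seq; apply: (big_ind (fun x => x <= d)%N) => //.
  by move=> x y hx hy; rewrite geq_max hx hy.
move=> m; rewrite mcoeff_msupp ltnNge; apply: contra => le_dm.
by rewrite p_small.
Qed.

Lemma mdeg_addU m i : mdeg (m + U_(i))%MM = (mdeg m).+1.
Proof. by rewrite mdegD mdeg1 addn1. Qed.

Lemma msize_mderiv p i e : (msize p <= e.+1)%N -> (msize (mderiv i p) <= e)%N.
Proof.
move=> /leq_msizeP p_small; apply/leq_msizeP => m le_em.
by rewrite mcoeff_deriv p_small ?mul0rn // mdeg_addU.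
Qed.

Lemma msize_mderivZ p i (a : R) e :
  (msize p <= e)%N -> (msize (mderiv i p + a *: p) <= e)%N.
Proof.
move=> /leq_msizeP p_small; apply/leq_msizeP => m le_em.
rewrite mcoeffD mcoeffZ mcoeff_deriv !p_small ?mulr0 ?mul0rn ?addr0 //.
by rewrite mdeg_addU (leq_trans le_em).
Qed.

Lemma mcoeff_mderivZ_top p i (a : R) d b : (msize p <= d.+1)%N -> mdeg b = d ->
  (mderiv i p + a *: p)@_b = a * p@_b.
Proof.
move=> /leq_msizeP p_small deg_b; rewrite mcoeffD mcoeffZ mcoeff_deriv.
by rewrite p_small ?mul0rn ?add0r // mdeg_addU deg_b.
Qed.

Lemma mcoeff_pihomog (mf : measure n) d p m :
  (pihomog mf d p)@_m = if mf m == d then p@_m else 0.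
Proof.
rewrite pihomogE raddf_sum /=.
under eq_bigr do rewrite mcoeffZ mcoeffX mulr_natr mulrb.
rewrite -big_mkcondr /=; case: eqP => [mf_m|mf_m]; last first.
  by rewrite big1 // => m' /andP[/eqP mf_m' /eqP m'm]; case: mf_m; rewrite -m'm.
rewrite (eq_bigl (pred1 m)) => [|m'] /=; last first.
  by case: (m' =P m) => [->|]; rewrite ?andbF // mf_m eqxx.
have [m_supp|m_supp] := boolP (m \in msupp p).
  by rewrite -big_filter filter_pred1_uniq ?msupp_uniq // big_seq1.
rewrite (memN_msupp_eq0 m_supp) big1_seq // => m' /andP[/eqP -> m_in].
by rewrite m_in in m_supp.
Qed.

End MpolySize.

Lemma lin0 (U V : lmodType CC) (f : U -> V) : lin f -> f 0 = 0.
Proof.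
move=> f_lin; apply: (addIr (f 0)); rewrite add0r.
by have := f_lin 1 0 0; rewrite !scale1r addr0.
Qed.

Lemma Dsubmodule_submod_closed n (L : lmodType CC) (X D : 'I_n -> L -> L)
    (N : {pred L}) :
  is_Dsubmodule X D N -> GRing.submod_closed N.
Proof. by case. Qed.

Section LinSum.
Variables (n k : nat) (phi : 'I_k -> {mpoly CC[n]}).
Hypothesis phi_homog : forall j, phi j \is 1.-homog.
Local Notation L := (LinSum n k).
Local Notation grad := {ffun 'I_n -> CC}.
Implicit Types (u v : L) (g : grad) (b : 'X_{1..n}).

Definition gradv j : grad := [ffun i => (phi j)@_U_(i)].

Lemma mderiv_phi i j : mderiv i (phi j) = (gradv j i)%:MP.
Proof.
apply/mpolyP => m; rewrite mcoeff_deriv mcoeffC ffunE.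
have [->|m_ne0] := eqVneq m 0%MM; first by rewrite add0m mnm0E mulr1.
rewrite mulr0 (dhomog_nemf_coeff (phi_homog j)) ?mul0rn //.
by rewrite /= mdeg_addU eqSS mdeg_eq0.
Qed.

Definition Dshift i a u : L := LinD phi i u - a *: u.

Lemma DshiftE i a u j : Dshift i a u j = mderiv i (u j) + (gradv j i - a) *: u j.
Proof. by rewrite /Dshift !ffunE mderiv_phi !ffunE mul_mpolyC scalerBl addrA. Qed.

Definition constv (c : 'rV[CC]_k) : L := [ffun j => (c 0 j)%:MP].

Fact constv_is_linear : linear constv.
Proof.
move=> a c c'; apply/ffunP => j.
by rewrite !ffunE !mxE mpolyCD mpolyCM mul_mpolyC.
Qed.

HB.instance Definition _ :=
  GRing.isLinear.Build CC 'rV[CC]_k L _ constv constv_is_linear.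

Definition pmul (p : {mpoly CC[n]}) u : L := [ffun j => p * u j].

Fact pmul_is_linear p : linear (pmul p).
Proof. by move=> a u v; apply/ffunP => j; rewrite !ffunE mulrDr scalerAr. Qed.

HB.instance Definition _ p :=
  GRing.isLinear.Build CC L L _ (pmul p) (pmul_is_linear p).

Definition coefv b u : 'rV[CC]_k := \row_j (u j)@_b.

Definition class_coefv g b u : 'rV[CC]_k :=
  \row_j (if gradv j == g then (u j)@_b else 0).

Definition grads : seq grad := undup (codom gradv).

Lemma coefv_sum_class b u : coefv b u = \sum_(g <- grads) class_coefv g b u.
Proof.
apply/rowP => j; rewrite summxE mxE; under eq_bigr do rewrite mxE.
rewrite -big_mkcond (eq_bigl (pred1 (gradv j))) => [|g]; last by rewrite eq_sym.
rewrite -big_filter filter_pred1_uniq ?undup_uniq ?mem_undup ?codom_f //.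
by rewrite big_seq1.
Qed.

Lemma LinSum_decomp d u : (forall j, msize (u j) <= d)%N ->
  u = \sum_(b : 'X_{1..n < d}) pmul 'X_[b] (constv (coefv b u)).
Proof.
move=> le_u; apply/ffunP => j; rewrite sum_ffunE {1}(mpolywE (le_u j)).
by apply: eq_bigr => b _; rewrite !ffunE mxE mulrC mul_mpolyC.
Qed.

Definition kill_others g (s : seq 'I_k) u : L :=
  foldr (fun j v => if [pick i | gradv j i != g i] is Some i
                    then Dshift i (gradv j i) v else v) u s.

(* For each [j] outside the class [g], [Dshift i (gradv j i)], with
   [gradv j i != g i], rescales the top coefficients of the class [g] by
   [g i - gradv j i]. *)
Lemma kill_others_spec g d u : (forall j, msize (u j) <= d.+1)%N -> forall s,
  [/\ forall j, (msize (kill_others g s u j) <= d.+1)%N,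
      forall j, j \in s -> gradv j != g -> (msize (kill_others g s u j) <= d)%N &
      exists2 ka : CC, ka != 0 & forall j b, gradv j = g -> mdeg b = d ->
        (kill_others g s u j)@_b = ka * (u j)@_b].
Proof.
move=> le_u; elim=> [|j' s [le_z lt_z [ka ka_ne0 z_top]]] /=.
  by split=> //; exists 1 => [|j b _ _]; rewrite ?oner_neq0 ?mul1r.
case: pickP => [i /= gj'i|gj'_g]; last first.
  have gj' : gradv j' = g by apply/ffunP => i; apply/eqP/negbFE/gj'_g.
  split=> //; last by exists ka.
  by move=> j; rewrite inE => /predU1P[->|/lt_z//]; rewrite gj' eqxx.
set z := kill_others g s u in le_z lt_z z_top *.
split=> [j|j|]; rewrite ?DshiftE.
- exact: msize_mderivZ.
- rewrite inE => /predU1P[->|/lt_z lt_zj /lt_zj]; last exact: msize_mderivZ.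
  by rewrite subrr scale0r addr0 => _; apply: msize_mderiv.
exists ((g i - gradv j' i) * ka) => [|j b gj deg_b].
  by rewrite mulf_neq0 // subr_eq0 eq_sym.
rewrite DshiftE (mcoeff_mderivZ_top _ _ (le_z j) deg_b) z_top // gj.
by rewrite mulrA.
Qed.

Section Submodule.
Variable N : {pred L}.
Hypothesis N_Dsub : is_Dsubmodule (@LinX n k) (LinD phi) N.

HB.instance Definition _ :=
  GRing.isSubmodClosed.Build CC L N (Dsubmodule_submod_closed N_Dsub).

Lemma LinX_in i u : u \in N -> LinX i u \in N.
Proof. by case: N_Dsub => _ _ + _; apply. Qed.

Lemma LinD_in i u : u \in N -> LinD phi i u \in N.
Proof. by case: N_Dsub => _ _ _; apply. Qed.

Lemma Dshift_in i a u : u \in N -> Dshift i a u \in N.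
Proof. by move=> u_in; rewrite rpredB ?rpredZ ?LinD_in. Qed.

Lemma kill_others_in g s u : u \in N -> kill_others g s u \in N.
Proof.
move=> u_in; elim: s => //= j s z_in.
by case: pickP => [i _|_] //; apply: Dshift_in.
Qed.

Lemma pmul_in p u : u \in N -> pmul p u \in N.
Proof.
pose stable q := forall v, v \in N -> pmul q v \in N.
have stable1 : stable 1.
  by move=> v; have -> : pmul 1 v = v by apply/ffunP => j; rewrite ffunE mul1r.
have stableM q q' : stable q -> stable q' -> stable (q * q').
  move=> sq sq' v /sq'/sq; congr (_ \in N).
  by apply/ffunP => j; rewrite !ffunE mulrA.
have stableX m : stable 'X_[m].
  rewrite mpolyXE_id; apply: big_ind => // i _; elim: (m i) => // e IHe.
  rewrite exprS; apply: stableM IHe => v v_in.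
  have -> : pmul 'X_i v = LinX i v by apply/ffunP => j; rewrite !ffunE.
  exact: LinX_in.
elim/mpolyind: p u => [|a m p _ _ IHp] u u_in.
  have -> : pmul 0 u = 0 by apply/ffunP => j; rewrite !ffunE mul0r.
  exact: rpred0.
have -> : pmul (a *: 'X_[m] + p) u = a *: pmul 'X_[m] u + pmul p u.
  by apply/ffunP => j; rewrite !ffunE mulrDl scalerAl.
by rewrite rpredD ?rpredZ ?stableX ?IHp.
Qed.

Definition coef_closed d := forall u, u \in N -> (forall j, msize (u j) <= d)%N ->
  forall g b, constv (class_coefv g b u) \in N.

Lemma coef_closed0 : coef_closed 0.
Proof.
move=> u _ le_u g b; have -> : class_coefv g b u = 0.
  apply/rowP => j; rewrite !mxE.
  have /eqP -> : u j == 0 by rewrite -msize_poly_eq0 -leqn0.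
  by rewrite mcoeff0 if_same.
by rewrite raddf0 rpred0.
Qed.

Lemma top_coef_closed d u g b : coef_closed d -> u \in N ->
  (forall j, msize (u j) <= d.+1)%N -> mdeg b = d ->
  constv (class_coefv g b u) \in N.
Proof.
move=> IH u_in le_u deg_b.
have [le_z lt_z [ka ka_ne0 z_top]] := kill_others_spec g le_u (enum 'I_k).
set z := kill_others g (enum 'I_k) u in le_z lt_z z_top.
have z_in : z \in N by apply: kill_others_in.
have {}lt_z j : gradv j != g -> (msize (z j) <= d)%N.
  by apply: lt_z; rewrite mem_enum.
have [b0|[i bi_ne0]] : b = 0%MM \/ exists i, b i != 0%N.
- case: (pickP (fun i => b i != 0%N)) => [i|b0]; [by right; exists i | left].
  by apply/mnmP => i; rewrite mnm0E; apply/eqP/negbFE/b0.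
- have d0 : d = 0%N by rewrite -deg_b b0 mdeg0.
  suff -> : constv (class_coefv g b u) = ka^-1 *: z by rewrite rpredZ.
  apply/ffunP => j; rewrite !ffunE mxE; case: eqP => [gj|/eqP gj]; last first.
    have /eqP -> : z j == 0 by rewrite -msize_poly_eq0 -leqn0 -d0 lt_z.
    by rewrite scaler0.
  rewrite [z j]msize1_polyC -?d0 // -mul_mpolyC -mpolyCM b0 z_top ?mdeg0 ?d0 //.
  by rewrite mulKf.
(* [Dshift i (g i)] differentiates the class [g], lowering its degree too;
   the coefficient at [b] is then read off at [b - U_(i)]. *)
set b' := (b - U_(i))%MM.
have bE : (b' + U_(i))%MM = b by rewrite submK // lep1mP.
set y := Dshift i (g i) z.
have yE j : gradv j = g -> y j = mderiv i (z j).
  by move=> gj; rewrite /y DshiftE gj subrr scale0r addr0.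
have y_small j : (msize (y j) <= d)%N.
  have [/eqP gj|gj] := boolP (gradv j == g).
    by rewrite yE //; apply: msize_mderiv.
  by rewrite /y DshiftE; apply: msize_mderivZ; apply: lt_z.
suff y_coef : class_coefv g b' y = (ka * (b i)%:R) *: class_coefv g b u.
  have := IH y (Dshift_in _ _ z_in) y_small g b'.
  rewrite y_coef linearZ rpredZeq mulf_eq0 pnatr_eq0.
  by rewrite (negbTE ka_ne0) (negbTE bi_ne0).
apply/rowP => j; rewrite !mxE; case: eqP => [gj|_]; last by rewrite mulr0.
rewrite yE // mcoeff_deriv bE z_top //.
have -> : (b' i).+1 = b i by rewrite -bE mnmDE mnm1E eqxx addn1.
by rewrite mulr_natr mulrnAl.
Qed.

Lemma coef_closedS d : coef_closed d -> coef_closed d.+1.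
Proof.
move=> IH u u_in le_u g b.
have [deg_b|deg_b] := eqVneq (mdeg b) d; first exact: top_coef_closed deg_b.
pose top : L := [ffun j => pihomog mdeg d (u j)].
have top_in : top \in N.
  have -> : top = \sum_(m : 'X_{1..n < d.+1} | mdeg m == d)
                    pmul 'X_[m] (constv (coefv m u)).
    apply/ffunP => j; rewrite ffunE (pihomogwE _ _ (le_u j)) sum_ffunE.
    by apply: eq_bigr => m _; rewrite !ffunE mxE mulrC mul_mpolyC.
  rewrite rpred_sum // => m /eqP deg_m; rewrite pmul_in // coefv_sum_class.
  rewrite linear_sum rpred_sum // => g' _.
  exact: top_coef_closed IH u_in le_u deg_m.
have rE j m : ((u - top) j)@_m = if mdeg m == d then 0 else (u j)@_m.
  by rewrite !ffunE mcoeffB mcoeff_pihomog; case: ifP; rewrite ?subrr ?subr0.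
suff -> : class_coefv g b u = class_coefv g b (u - top).
  apply: IH; first by rewrite rpredB.
  move=> j; apply/leq_msizeP => m le_dm; rewrite rE.
  case: eqP => // /eqP deg_m; move/leq_msizeP: (le_u j); apply.
  by rewrite ltn_neqAle eq_sym deg_m.
by apply/rowP => j; rewrite !mxE rE (negbTE deg_b).
Qed.

Lemma class_coefv_in u g b : u \in N -> constv (class_coefv g b u) \in N.
Proof.
move=> u_in; have coef_closedP d : coef_closed d.
  by elim: d => [|d]; [apply: coef_closed0 | apply: coef_closedS].
by apply: (coef_closedP (\max_j msize (u j))) => // j; apply: leq_bigmax.
Qed.

Lemma coefv_in u b : u \in N -> constv (coefv b u) \in N.
Proof.
move=> u_in; rewrite coefv_sum_class linear_sum.
by rewrite rpred_sum // => g _; apply: class_coefv_in.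
Qed.

End Submodule.

Section Quotient.
Variables (M : lmodType CC) (XM DM : 'I_n -> M -> M).
Hypotheses (XM_lin : forall i, lin (XM i)) (DM_lin : forall i, lin (DM i)).
Variables (N : {pred L}) (f : L -> M).
Hypothesis N_Dsub : is_Dsubmodule (@LinX n k) (LinD phi) N.
Hypothesis f_lin :
  forall a u v, u \in N -> v \in N -> f (a *: u + v) = a *: f u + f v.
Hypothesis f_X : forall i u, u \in N -> f (LinX i u) = XM i (f u).
Hypothesis f_D : forall i u, u \in N -> f (LinD phi i u) = DM i (f u).
Hypothesis f_surj : forall m, exists2 u, u \in N & f u = m.

HB.instance Definition _ :=
  GRing.isSubmodClosed.Build CC L N (Dsubmodule_submod_closed N_Dsub).

Lemma f_sub u v : u \in N -> v \in N -> f (u - v) = f u - f v.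
Proof.
by move=> u_in v_in; rewrite [u - v]addrC -[- v]scaleN1r f_lin // scaleN1r addrC.
Qed.

Definition K : {pred L} := [pred u | (u \in N) && (f u == 0)].

Lemma K_Dsub : is_Dsubmodule (@LinX n k) (LinD phi) K.
Proof.
have f0 : f 0 = 0 by rewrite -(subrr 0) f_sub ?rpred0 // subrr.
split=> [|a u v|i u|i u]; rewrite !inE ?rpred0 ?f0 ?eqxx //;
  move=> /andP[u_in /eqP fu].
- case/andP=> v_in /eqP fv.
  by rewrite rpredD ?rpredZ // f_lin // fu fv scaler0 addr0 eqxx.
- by rewrite (LinX_in N_Dsub) // f_X // fu (lin0 (XM_lin i)) eqxx.
- by rewrite (LinD_in N_Dsub) // f_D // fu (lin0 (DM_lin i)) eqxx.
Qed.

HB.instance Definition _ :=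
  GRing.isSubmodClosed.Build CC L K (Dsubmodule_submod_closed K_Dsub).

Lemma subr_inK u v : u \in N -> v \in N -> (u - v \in K) = (f u == f v).
Proof. by move=> u_in v_in; rewrite inE rpredB //= f_sub // subr_eq0. Qed.

(* [bl l] indexes a component of the gradient class on which [c l] is
   supported. *)
Definition free_family r (c : 'I_r -> 'rV[CC]_k) (bl : 'I_r -> 'I_k) :=
  [/\ forall l, constv (c l) \in N,
      forall l j, c l 0 j != 0 -> gradv j = gradv (bl l) &
      forall a : 'I_r -> CC,
        constv (\sum_l a l *: c l) \in K -> forall l, a l = 0].

Definition spanning r (c : 'I_r -> 'rV[CC]_k) :=
  forall j0 (v : 'rV[CC]_k), constv v \in N ->
    (forall j, v 0 j != 0 -> gradv j = gradv j0) ->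
  exists a : 'I_r -> CC, constv (v - \sum_l a l *: c l) \in K.

Lemma free_family_size r (c : 'I_r -> 'rV[CC]_k) (bl : 'I_r -> 'I_k) :
  free_family c bl -> (r <= k)%N.
Proof.
case=> _ _ c_free; have: free [tuple c l | l < r].
  apply/freeP => a sum0 l; apply: c_free.
  suff -> : \sum_l a l *: c l = 0 by rewrite raddf0 rpred0.
  by rewrite -[RHS]sum0; apply: eq_bigr => l' _; rewrite -tnth_nth tnth_mktuple.
rewrite /free size_tuple => /eqP <-.
by rewrite (leq_trans (dimvS (subvf _))) // dimvf /dim /= mul1n.
Qed.

Lemma free_family_extend r (c : 'I_r -> 'rV[CC]_k) (bl : 'I_r -> 'I_k) :
  free_family c bl -> ~ spanning c ->
  exists c' bl', free_family (r := r.+1) c' bl'.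
Proof.
case=> c_in c_cls c_free not_span.
have [j0 [v [v_in v_cls v_out]]] : exists j0 (v : 'rV[CC]_k), [/\ constv v \in N,
    forall j, v 0 j != 0 -> gradv j = gradv j0 &
    forall a : 'I_r -> CC, constv (v - \sum_l a l *: c l) \notin K].
  apply: NNPP => no_v; apply: not_span => j0 v v_in v_cls; apply: NNPP => no_a.
  apply: no_v; exists j0, v; split=> // a.
  by apply/negP => a_in; apply: no_a; exists a.
pose c' (l : 'I_r.+1) := if unlift ord0 l is Some l' then c l' else v.
pose bl' (l : 'I_r.+1) := if unlift ord0 l is Some l' then bl l' else j0.
exists c', bl'; split=> [l|l j|a].
- by rewrite /c'; case: unliftP.
- by rewrite /c' /bl'; case: unliftP => [l' _|_]; [apply: c_cls | apply: v_cls].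
rewrite big_ord_recl /c' unlift_none; under eq_bigr do rewrite liftK.
move=> comb_in; suff a0 : a ord0 = 0.
  move: comb_in; rewrite a0 scale0r add0r => /c_free a_0 l.
  by case: (unliftP ord0 l) => [l' ->|->].
(* Otherwise [v] would lie in the span of the [c l] modulo [K]. *)
apply/eqP/negP => /negP a0_ne0.
move/negP: (v_out (fun l => - (a (lift ord0 l) / a ord0))); apply.
suff -> : v - \sum_l - (a (lift ord0 l) / a ord0) *: c l =
          (a ord0)^-1 *: (a ord0 *: v + \sum_l a (lift ord0 l) *: c l).
  by rewrite linearZ rpredZ.
rewrite scalerDr scalerA mulVf // scale1r scaler_sumr -sumrN.
by congr (_ + _); apply: eq_bigr => l _; rewrite scalerA scaleNr opprK mulrC.
Qed.

Lemma spanning_free_family :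
  exists r c bl, free_family (r := r) c bl /\ spanning c.
Proof.
apply: NNPP => no_basis.
suff [c [bl /free_family_size]] : exists c bl, free_family (r := k.+1) c bl.
  by rewrite ltnn.
elim: k.+1 => [|t [c [bl c_free]]].
  exists (fun => 0), (fun l => ffun0 (card_ord 0) l).
  by split=> [[]|[]|a _ []].
have [c_span|no_span] := classic (spanning c).
  by case: no_basis; exists t, c, bl.
exact: free_family_extend c_free no_span.
Qed.

Section Basis.
Variables (r : nat) (c : 'I_r -> 'rV[CC]_k) (bl : 'I_r -> 'I_k).
Hypotheses (c_free : free_family c bl) (c_span : spanning c).

Definition comb (p : LinSum n r) : L := \sum_l pmul (p l) (constv (c l)).

Lemma combE p j : comb p j = \sum_l c l 0 j *: p l.
Proof.
by rewrite sum_ffunE; apply: eq_bigr => l _; rewrite !ffunE mulrC mul_mpolyC.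
Qed.

Fact comb_is_linear : linear comb.
Proof.
move=> a p q; apply/ffunP => j; rewrite !ffunE !combE scaler_sumr -big_split.
by apply: eq_bigr => l _; rewrite !ffunE scalerDr scalerA mulrC -scalerA.
Qed.

HB.instance Definition _ := GRing.isLinear.Build CC _ L _ comb comb_is_linear.

Lemma comb_in p : comb p \in N.
Proof.
by case: c_free => c_in _ _; rewrite rpred_sum // => l _; apply: pmul_in.
Qed.

Lemma comb_LinX i p : comb (LinX i p) = LinX i (comb p).
Proof.
apply/ffunP => j; rewrite ffunE !combE mulr_sumr.
by apply: eq_bigr => l _; rewrite ffunE scalerAr.
Qed.

Lemma comb_LinD i p : comb (LinD (phi \o bl) i p) = LinD phi i (comb p).
Proof.
case: c_free => _ c_cls _; apply/ffunP => j; rewrite ffunE !combE raddf_sum.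
rewrite mulr_sumr -big_split; apply: eq_bigr => l _ /=.
rewrite ffunE !mderiv_phi mderivZ scalerDr scalerAr; congr (_ + _).
by have [->|/c_cls ->] := eqVneq (c l 0 j) 0; rewrite ?scale0r ?mulr0.
Qed.

Lemma comb_Dhom : is_Dhom (@LinX n r) (LinD (phi \o bl)) XM DM (f \o comb).
Proof.
split=> [a p q|i p|i p] /=; last by rewrite comb_LinD f_D ?comb_in.
  by rewrite linearP f_lin ?comb_in.
by rewrite comb_LinX f_X ?comb_in.
Qed.

Lemma coefv_comb b p : coefv b (comb p) = \sum_l (p l)@_b *: c l.
Proof.
apply/rowP => j; rewrite mxE combE summxE raddf_sum.
by apply: eq_bigr => l _ /=; rewrite mcoeffZ !mxE mulrC.
Qed.

Lemma comb_inj : injective (f \o comb).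
Proof.
case: c_free => _ _ c_ind p q /= /eqP; rewrite -subr_inK ?comb_in // -linearB.
move=> pq_in; apply/ffunP => l; apply/mpolyP => b.
have := coefv_in K_Dsub b pq_in; rewrite coefv_comb => /c_ind/(_ l).
by rewrite !ffunE mcoeffB => /eqP; rewrite subr_eq0 => /eqP.
Qed.

Lemma comb_reach_class g b u : u \in N -> g \in grads ->
  exists p, comb p - pmul 'X_[b] (constv (class_coefv g b u)) \in K.
Proof.
move=> u_in; rewrite mem_undup => /codomP[j0 ->].
have [|a a_in] := @c_span j0 _ (class_coefv_in N_Dsub (gradv j0) b u_in).
  by move=> j; rewrite mxE; case: (gradv j =P gradv j0); rewrite ?eqxx.
exists [ffun l => a l *: 'X_[b]].
suff -> : comb [ffun l => a l *: 'X_[b]] =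
          pmul 'X_[b] (constv (\sum_l a l *: c l)).
  by rewrite -opprB rpredN -!linearB (pmul_in K_Dsub).
apply/ffunP => j; rewrite combE !ffunE summxE raddf_sum mulr_sumr.
apply: eq_bigr => l _ /=; rewrite !ffunE !mxE scalerA mulrC -mul_mpolyC.
exact: mulrC.
Qed.

Lemma comb_surj m : exists p, f (comb p) = m.
Proof.
have [u u_in <-] := f_surj m.
suff [p] : exists p, comb p - u \in K.
  by rewrite subr_inK ?comb_in // => /eqP; exists p.
pose reach v := exists p, comb p - v \in K.
have reach_sum I (s : seq I) (P : pred I) F :
    (forall i, P i -> reach (F i)) -> reach (\sum_(i <- s | P i) F i).
  apply: big_ind => [|v w [p pv] [q qw]].
    by exists 0; rewrite raddf0 subr0 rpred0.
  by exists (p + q); rewrite linearD opprD addrACA rpredD.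
have le_u j : (msize (u j) <= \max_j' msize (u j'))%N := leq_bigmax j.
rewrite (LinSum_decomp le_u); apply: (reach_sum) => b _.
rewrite coefv_sum_class !linear_sum big_seq; apply: (reach_sum) => g.
exact: comb_reach_class.
Qed.

End Basis.

Lemma subquotient_linear_module : is_linear_module XM DM.
Proof.
have [r [c [bl [c_free c_span]]]] := spanning_free_family.
have comb_onto m : exists p, (f \o comb c) p == m.
  by have [p <-] := comb_surj c_free c_span m; exists p.
exists r, (phi \o bl), (f \o comb c); split=> [j||].
- exact: phi_homog.
- exact: comb_Dhom c_free.
exists (fun m => xchoose (comb_onto m)) => [p|m].
  by apply: (comb_inj c_free); apply/eqP/(xchooseP (comb_onto _)).
by apply/eqP/(xchooseP (comb_onto m)).
Qed.

End Quotient.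
End LinSum.

Theorem mainTheorem3 (n : nat)
    (L : lmodType CC) (XL DL : 'I_n -> L -> L)
    (M : lmodType CC) (XM DM : 'I_n -> M -> M) :
  is_linear_module XL DL ->
  is_Dmodule XM DM ->
  is_subquotient XL DL XM DM ->
  is_linear_module XM DM.
Proof.
move=> [k [phi [g [phi_homog [g_lin g_X g_D] [g' _ g'K]]]]] [XM_lin DM_lin _ _ _].
move=> [N [f [[N0 N_lin N_X N_D] f_lin f_X f_D f_surj]]].
apply: (subquotient_linear_module phi_homog XM_lin DM_lin
         (N := [pred u | g u \in N]) (f := f \o g)).
- split=> [|a u v|i u|i u]; rewrite !inE ?(lin0 g_lin) ?g_lin ?g_X ?g_D //.
  + exact: N_lin.
  + exact: N_X.
  + exact: N_D.
- by move=> a u v u_in v_in /=; rewrite g_lin f_lin.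
- by move=> i u u_in /=; rewrite g_X f_X.
- by move=> i u u_in /=; rewrite g_D f_D.
- by move=> m; have [u u_in <-] := f_surj m; exists (g' u); rewrite /= ?inE g'K.
Qed.
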